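(* Let $M,N\ge1$ be integers and let $\sigma$ be a nonempty set of (distinct) functions $\mathbb{Z}_M\to\mathbb{Z}_N$ that is totally indistinguishable. Then $\sigma$ has cardinality at least $4$.
   Context: A set $\sigma$ of functions $\mathbb{Z}_M\to\mathbb{Z}_N$ is totally indistinguishable if for every $x\in\mathbb{Z}_M$ and every $f\in\sigma$ there exists $f'\in\sigma$ with $f'\neq f$ and $f'(x)=f(x)$. *)

From mathcomp Require Import all_boot.
Set Implicit Arguments. Unset Strict Implicit. Unset Printing Implicit Defensive.

(* Z_M is represented by the ordinal type 'I_M = {0,...,M-1} (valid for all M >= 1;
   the ring structure is irrelevant here). A set of functions Z_M -> Z_N is a
   finite set of finite functions. *)
Definition totally_indistinguishable (M N : nat)
    (sigma : {set {ffun 'I_M -> 'I_N}}) : Prop :=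
  forall (x : 'I_M) (f : {ffun 'I_M -> 'I_N}), f \in sigma ->
    exists f' : {ffun 'I_M -> 'I_N}, [/\ f' \in sigma, f' != f & f' x = f x].

From mathcomp Require Import all_boot.

(* Take f in sigma and a partner g != f at any point; they differ at some x.
   At x, f and g each have a partner agreeing with them there, and since
   f x != g x the two pairs {f, f'} and {g, g'} are disjoint. *)

Set Implicit Arguments.
Unset Strict Implicit.
Unset Printing Implicit Defensive.

Lemma four_le_card_of_separated_pairs (T : finType) (U : eqType) (A : {set T})
    (p : T -> U) (a a' b b' : T) :
    [/\ a \in A, a' \in A, b \in A & b' \in A] ->
    a != a' -> b != b' -> p a' = p a -> p b' = p b -> p a != p b ->
  4 <= #|A|.
Proof.
move=> [aA a'A bA b'A] neq_a neq_b pa' pb' pab.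
have sep u v : p u != p v -> u != v by apply: contraNneq => ->.
have uniq_ab : uniq [:: a; a'; b; b'].
  have ab : a != b by exact: sep.
  have ab' : a != b' by apply: sep; rewrite pb'.
  have a'b : a' != b by apply: sep; rewrite pa'.
  have a'b' : a' != b' by apply: sep; rewrite pa' pb'.
  by rewrite /= !inE !negb_or neq_a neq_b ab ab' a'b a'b'.
have <- : size [:: a; a'; b; b'] = 4 by [].
rewrite -(card_uniqP uniq_ab); apply: subset_leq_card.
by apply/subsetP => y; rewrite !inE => /or4P[] /eqP ->.
Qed.

Lemma exists_ffun_neq (aT : finType) (rT : eqType) (f g : {ffun aT -> rT}) :
  f != g -> exists x, f x != g x.
Proof.
move=> fg; apply/existsP; apply: contraNT fg => /existsPn same.
by apply/eqP/ffunP => x; apply/eqP/negbNE/same.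
Qed.

Section TotallyIndistinguishable.

Variables (aT rT : finType) (sigma : {set {ffun aT -> rT}}).

Hypothesis sigma_indist : forall (x : aT) (f : {ffun aT -> rT}), f \in sigma ->
  exists f' : {ffun aT -> rT}, [/\ f' \in sigma, f' != f & f' x = f x].

Lemma indistinguishable_card_ge4 (x0 : aT) : sigma != set0 -> 4 <= #|sigma|.
Proof.
case/set0Pn => f fS.
have [g [gS gf _]] := sigma_indist x0 fS.
have [x gfx] := exists_ffun_neq gf.
have [f' [f'S f'f f'x]] := sigma_indist x fS.
have [g' [g'S g'g g'x]] := sigma_indist x gS.
apply: (four_le_card_of_separated_pairs (p := fun h : {ffun aT -> rT} => h x)
         (a := g) (a' := g') (b := f) (b' := f')) => //; by rewrite eq_sym.
Qed.

End TotallyIndistinguishable.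

Theorem lemma2 (M N : nat) (hM : 1 <= M) (hN : 1 <= N)
    (sigma : {set {ffun 'I_M -> 'I_N}}) :
  sigma != set0 -> totally_indistinguishable sigma -> 4 <= #|sigma|.
Proof.
by move=> sigma_nonempty sigma_indist;
  apply: (indistinguishable_card_ge4 sigma_indist (Ordinal hM)).
Qed.
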